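(* Let $(A,q)$ be a metric group and let $n$ be the exponent of $A$. Then $(A,q)$ is isotropically generated if and only if (i) $q^n=1$, and (ii) $(A,q)$ contains a hyperbolic metric subgroup isomorphic to $(\mathbb{Z}/n\mathbb{Z}\times\mathbb{Z}/n\mathbb{Z},h)$, where $h(x,y)=\zeta^{xy}$ for a primitive $n$th root of unity $\zeta$.
   Context: $k$ is an algebraically closed field of characteristic $0$. A pre-metric group $(A,q)$ is a finite Abelian group $A$ with a quadratic form $q:A\to k^\times$; it is a metric group if $q$ is non-degenerate (its associated bilinear form $B(x,y)=q(x+y)/(q(x)q(y))$ is non-degenerate). $x\in A$ is isotropic if $q(x)=1$; $(A,q)$ is isotropically generated if $A$ is generated by its isotropic elements. A metric subgroup isomorphic to $(\mathbb{Z}/n\mathbb{Z}\times\mathbb{Z}/n\mathbb{Z},h)$ means a subgroup on which the restriction of $q$ is isomorphic to $h$. *)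

From HB Require Import structures.
From mathcomp Require Import all_boot all_order all_algebra all_fingroup all_solvable.
Set Implicit Arguments. Unset Strict Implicit. Unset Printing Implicit Defensive.
Import GRing.Theory.
Local Open Scope ring_scope.

(* The finite Abelian group A is the carrier of a finZmodType V (written
   additively).  A quadratic form takes values in k^x, i.e. nonzero elements
   of k. *)

Definition qbil (k : fieldType) (V : zmodType) (q : V -> k) (x y : V) : k :=
  q (x + y) / (q x * q y).

Definition quadratic_form (k : fieldType) (V : zmodType) (q : V -> k) : Prop :=
  [/\ forall x, q x != 0,
      forall x, q (- x) = q x,
      forall x y z, qbil q (x + y) z = qbil q x z * qbil q y z
    & forall x y z, qbil q x (y + z) = qbil q x y * qbil q x z].

Definition metric_group (k : fieldType) (V : zmodType) (q : V -> k) : Prop :=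
  quadratic_form q /\ forall x, (forall y, qbil q x y = 1) -> x = 0.

Definition isotropic (k : fieldType) (V : zmodType) (q : V -> k) (x : V) : bool :=
  q x == 1.

Definition isotropically_generated (k : fieldType) (V : finZmodType) (q : V -> k)
  : Prop := (<< [set x : V | isotropic q x] >>)%g = [set: V].

(* Z/nZ, for n >= 1 (for n = 0 this gives Z/1Z; only used with n >= 1) *)
Definition Zmod (n : nat) : finZmodType := 'I_n.-1.+1.

Definition hyperbolic_form (k : fieldType) (n : nat) (zeta : k)
  (z : (Zmod n * Zmod n)%type) : k := zeta ^+ (nat_of_ord z.1 * nat_of_ord z.2)%N.

(* (A,q) contains a metric subgroup isomorphic to (Z/nZ x Z/nZ, h): an
   injective group homomorphism f : Z/nZ x Z/nZ -> A with q o f = h. *)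
Definition contains_hyperbolic (k : fieldType) (V : finZmodType) (q : V -> k)
  (n : nat) (zeta : k) : Prop :=
  exists f : {additive (Zmod n * Zmod n)%type -> V},
    injective f /\ forall z, q (f z) = @hyperbolic_form k n zeta z.

(* Since B^n = 1, the map x |-> q(x)^n is additive, so q^n = 1 once A is
   generated by isotropic elements.  Among the isotropic pairs (a, b) pick one
   for which B(a, b) has maximal order d.  Taking the pi-part of one isotropic
   pair and the pi'-part of another yields again an isotropic pair, whose order
   combines the corresponding parts of the two orders; maximality thus gives
   B(s, t)^d = 1 for all isotropic s, t, hence B^d = 1 on A and d = n by
   non-degeneracy, and (i, j) |-> i a + j b is the hyperbolic embedding.
   Conversely, if e1, e2 are isotropic with B(e1, e2) = zeta, every x is
   congruent modulo <e1, e2> to some y orthogonal to e1 and e2; if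
   q(y) = zeta^u then y + e1 + (n - u) e2 is isotropic. *)

From HB Require Import structures.
From mathcomp Require Import all_boot all_order all_algebra all_fingroup all_solvable.
From mathcomp Require Import zify.
Set Implicit Arguments. Unset Strict Implicit. Unset Printing Implicit Defensive.
Import GRing.Theory FinRing.Theory.
Local Open Scope ring_scope.

Section QuadraticForm.
Variables (k : fieldType) (V : zmodType) (q : V -> k).
Hypothesis qfq : quadratic_form q.

Lemma qform_neq0 x : q x != 0. Proof. by case: qfq. Qed.
Lemma qformN x : q (- x) = q x. Proof. by case: qfq. Qed.
Lemma qbilDl x y z : qbil q (x + y) z = qbil q x z * qbil q y z.
Proof. by case: qfq. Qed.
Lemma qbilDr x y z : qbil q x (y + z) = qbil q x y * qbil q x z.
Proof. by case: qfq. Qed.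

Lemma qbilC x y : qbil q x y = qbil q y x.
Proof. by rewrite /qbil addrC [q x * _]mulrC. Qed.

Lemma qbil_neq0 x y : qbil q x y != 0.
Proof. by rewrite mulf_neq0 ?invr_eq0 ?mulf_neq0 ?qform_neq0. Qed.

Lemma qformD x y : q (x + y) = q x * q y * qbil q x y.
Proof. by rewrite /qbil mulrC divfK // mulf_neq0 ?qform_neq0. Qed.

Lemma qbil0l y : qbil q 0 y = 1.
Proof.
apply: (mulfI (qbil_neq0 0 y)).
by rewrite -qbilDl addr0 mulr1.
Qed.

Lemma qbil0r y : qbil q y 0 = 1.
Proof. by rewrite qbilC qbil0l. Qed.

Lemma qform0 : q 0 = 1.
Proof.
have /eqP := qbil0l 0; rewrite /qbil addr0 invfM mulrA divff ?qform_neq0 //.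
by rewrite mul1r invr_eq1 => /eqP.
Qed.

Lemma qbilNl x y : qbil q (- x) y = (qbil q x y)^-1.
Proof.
apply: (mulfI (qbil_neq0 x y)).
by rewrite -qbilDl subrr qbil0l mulfV ?qbil_neq0.
Qed.

Lemma qbilMnl x y m : qbil q (x *+ m) y = qbil q x y ^+ m.
Proof. by elim: m => [|m IHm]; rewrite ?qbil0l // mulrS qbilDl IHm exprS. Qed.

Lemma qbilMnr x y m : qbil q x (y *+ m) = qbil q x y ^+ m.
Proof. by rewrite qbilC qbilMnl qbilC. Qed.

Lemma qbilxx x : qbil q x x = q x ^+ 2.
Proof.
have := qformD x (- x); rewrite subrr qform0 qformN qbilC qbilNl => q0E.
by rewrite expr2 -[LHS]mul1r q0E mulfVK ?qbil_neq0.
Qed.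

Lemma qformMn x m : q (x *+ m) = q x ^+ (m * m).
Proof.
elim: m => [|m IHm]; first by rewrite qform0.
rewrite mulrS qformD IHm qbilMnr qbilxx -!exprM -[q x]expr1 -!exprM -!exprD.
by congr (_ ^+ _); lia.
Qed.

End QuadraticForm.

Section RootsOfUnity.
Variable k : fieldType.

Lemma prim_rootM (w1 w2 : k) d1 d2 :
  d1.-primitive_root w1 -> d2.-primitive_root w2 -> coprime d1 d2 ->
  (d1 * d2)%N.-primitive_root (w1 * w2).
Proof.
move=> w1_d1 w2_d2 co12.
have d12_gt0 : (0 < d1 * d2)%N.
  by rewrite muln_gt0 (prim_order_gt0 w1_d1) (prim_order_gt0 w2_d2).
have w_d12 : (w1 * w2) ^+ (d1 * d2) = 1.
  rewrite exprMn exprM [(d1 * d2)%N]mulnC [w2 ^+ _]exprM.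
  by rewrite (prim_expr_order w1_d1) (prim_expr_order w2_d2) !expr1n mulr1.
have [m w_m m_dv] := prim_order_exists d12_gt0 w_d12.
have w_mj j : (w1 * w2) ^+ (m * j) = 1 by rewrite exprM (prim_expr_order w_m) expr1n.
have wi_ji i j (wi : k) : i.-primitive_root wi -> wi ^+ (j * i) = 1.
  by move=> wi_i; rewrite mulnC exprM (prim_expr_order wi_i) expr1n.
have d1_dv_m : (d1 %| m)%N.
  rewrite -(@Gauss_dvdl _ _ d2) // (prim_order_dvd w1_d1).
  by rewrite -(w_mj d2) exprMn (wi_ji _ _ _ w2_d2) mulr1.
have d2_dv_m : (d2 %| m)%N.
  rewrite -(@Gauss_dvdl _ _ d1) 1?coprime_sym // (prim_order_dvd w2_d2).
  by rewrite -(w_mj d1) exprMn (wi_ji _ _ _ w1_d1) mul1r.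
suff -> : (d1 * d2)%N = m by [].
by apply/eqP; rewrite eqn_dvd m_dv Gauss_dvd // d1_dv_m d2_dv_m.
Qed.

Lemma prim_root_expr_part (z : k) d K (pi : nat_pred) :
  d.-primitive_root z -> pi^'.-nat K -> (d`_pi^' %| K)%N ->
  (d`_pi)%N.-primitive_root (z ^+ K).
Proof.
move=> z_d K_pi' dpi'_dv_K; have d_gt0 := prim_order_gt0 z_d.
have := exp_prim_root z_d K; congr (_.-primitive_root _).
have co_K : coprime K d`_pi.
  by rewrite coprime_sym (pnat_coprime (part_pnat _ _) K_pi').
rewrite -{1 2}(partnC pi d_gt0) Gauss_gcdr // (gcdn_idPr dpi'_dv_K).
by rewrite mulnK // part_gt0.
Qed.

End RootsOfUnity.

Lemma ltn_partC_part p d m :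
  prime p -> (0 < d)%N -> ~~ (m`_p %| d)%N -> (d < d`_p^' * m`_p)%N.
Proof.
move=> p_pr d_gt0; rewrite p_part pfactor_dvdn // -ltnNge => lt_log_dm.
rewrite -{1}(partnC p d_gt0) mulnC ltn_pmul2l ?part_gt0 //.
by rewrite p_part ltn_exp2l ?prime_gt1.
Qed.

Lemma mulrn_ordB (V : zmodType) m (u : V) (i j : 'I_m.+1) :
  u *+ m.+1 = 0 -> u *+ (i - j)%R = u *+ i - u *+ j.
Proof.
move=> u_m; have u_mod l : u *+ (l %% m.+1) = u *+ l.
  by rewrite {2}(divn_eq l m.+1) mulrnDr mulnC mulrnA u_m mul0rn add0r.
rewrite /= u_mod mulrnDr u_mod mulrnBr; last exact/ltnW.
by rewrite u_m sub0r.
Qed.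

Definition hyperbolic_pair (k : fieldType) (V : zmodType) (q : V -> k) (d : nat)
  (a b : V) : bool :=
  [&& isotropic q a, isotropic q b & d.-primitive_root (qbil q a b)].

Lemma isotropically_generated_ind (k : fieldType) (V : finZmodType) (q : V -> k)
  (P : V -> Prop) :
  isotropically_generated q -> P 0 -> (forall x y, P x -> P y -> P (x + y)) ->
  (forall x, isotropic q x -> P x) -> forall x, P x.
Proof.
move=> gen_q P0 PD P_iso x.
have /gen_prodgP[m [c c_iso ->]] : x \in <<[set x | isotropic q x]>>%g.
  by rewrite gen_q inE.
by apply: (big_ind P) => // i _; apply: P_iso; have := c_iso i; rewrite inE.
Qed.

Section FiniteQuadraticForm.
Variables (k : fieldType) (V : finZmodType) (q : V -> k).
Hypothesis qfq : quadratic_form q.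
Local Notation n := (exponent [set: V]).

Lemma mulrn_exponent (x : V) : x *+ n = 0.
Proof. by rewrite -zmodXgE expg_exponent ?inE. Qed.

Lemma qbil_exponent (x y : V) : qbil q x y ^+ n = 1.
Proof. by rewrite -(qbilMnl qfq) mulrn_exponent (qbil0l qfq). Qed.

Lemma prim_root_qbil_dvd_exponent d (x y : V) :
  d.-primitive_root (qbil q x y) -> (d %| n)%N.
Proof. by move/prim_order_dvd->; rewrite qbil_exponent. Qed.

Lemma qbil_mulrn_part_partC (pi : nat_pred) (x y : V) :
  qbil q (x *+ n`_pi) (y *+ n`_pi^') = 1.
Proof.
rewrite (qbilMnl qfq) (qbilMnr qfq) -exprM mulnC partnC ?exponent_gt0 //.
exact: qbil_exponent.
Qed.

Lemma hyperbolic_pair_mix (pi : nat_pred) d1 d2 (a b c e : V) :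
  hyperbolic_pair q d1 a b -> hyperbolic_pair q d2 c e ->
  hyperbolic_pair q (d1`_pi^' * d2`_pi)
    (a *+ n`_pi + c *+ n`_pi^') (b *+ n`_pi + e *+ n`_pi^').
Proof.
move=> /and3P[/eqP qa /eqP qb ab_d1] /and3P[/eqP qc /eqP qe ce_d2].
have iso_mulrn u m : q u = 1 -> q (u *+ m) = 1.
  by move=> qu; rewrite (qformMn qfq) qu expr1n.
have orth_part u v : qbil q (u *+ n`_pi) (v *+ n`_pi^') = 1.
  exact: qbil_mulrn_part_partC.
have orth_partC u v : qbil q (u *+ n`_pi^') (v *+ n`_pi) = 1.
  by rewrite (qbilC q) orth_part.
have n_gt0 := exponent_gt0 [set: V].
apply/and3P; split; rewrite /isotropic.
1,2: by apply/eqP; rewrite (qformD qfq) orth_part !iso_mulrn // !mulr1.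
rewrite !(qbilDl qfq) !(qbilDr qfq) orth_part orth_partC mulr1 mul1r.
rewrite !(qbilMnl qfq) !(qbilMnr qfq) -!exprM.
apply: prim_rootM; last by rewrite coprime_sym coprime_partC.
  apply: (prim_root_expr_part ab_d1).
    by rewrite pnatNK pnatM part_pnat.
  rewrite partnNK dvdn_mulr // partn_dvd //.
  exact: prim_root_qbil_dvd_exponent ab_d1.
apply: (prim_root_expr_part ce_d2); first by rewrite pnatM part_pnat.
rewrite dvdn_mulr // partn_dvd //.
exact: prim_root_qbil_dvd_exponent ce_d2.
Qed.

Lemma hyperbolic_pair_max_order :
  exists d a b, hyperbolic_pair q d a b /\
    forall s t, isotropic q s -> isotropic q t -> qbil q s t ^+ d = 1.
Proof.
pose P d := [exists a, exists b, hyperbolic_pair q d a b].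
have P1 : exists d, P d.
  have [m m_prim _] := prim_order_exists (exponent_gt0 _) (qbil_exponent 0 0).
  exists m; apply/existsP; exists 0; apply/existsP; exists 0.
  by rewrite /hyperbolic_pair /isotropic (qform0 qfq) eqxx.
have P_le_n d : P d -> (d <= n)%N.
  case/existsP=> a /existsP[b /and3P[_ _ ab_d]].
  exact/dvdn_leq/(prim_root_qbil_dvd_exponent ab_d)/exponent_gt0.
have [d /existsP[a /existsP[b ab_d]] d_max] := ex_maxnP P1 P_le_n.
exists d, a, b; split=> // s t s_iso t_iso.
have [m st_m _] := prim_order_exists (exponent_gt0 _) (qbil_exponent s t).
have st_pair : hyperbolic_pair q m s t by rewrite /hyperbolic_pair s_iso t_iso.
apply/eqP; rewrite -(prim_order_dvd st_m).
apply/(dvdn_partP _ (prim_order_gt0 st_m)) => p.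
rewrite mem_primes => /andP[p_pr _]; apply: contraT => m_p_ndvd.
have [_ _ ab_prim] := and3P ab_d.
(* else the p'-part of (a, b) mixed with the p-part of (s, t) beats d *)
have P_mix : P (d`_p^' * m`_p)%N.
  apply/existsP; eexists; apply/existsP; eexists.
  exact: hyperbolic_pair_mix ab_d st_pair.
have := d_max _ P_mix.
by rewrite leqNgt ltn_partC_part ?(prim_order_gt0 ab_prim).
Qed.

Lemma exponent_dvd_qbil_order d :
  (forall x, (forall y, qbil q x y = 1) -> x = 0) ->
  (forall x y : V, qbil q x y ^+ d = 1) -> (n %| d)%N.
Proof.
move=> nondeg qbil_d; apply/exponentP=> x _.
by rewrite zmodXgE; apply: nondeg => y; rewrite (qbilMnl qfq).
Qed.

Lemma hyperbolic_pair_embedding (a b : V) :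
  hyperbolic_pair q n a b -> contains_hyperbolic q n (qbil q a b).
Proof.
case/and3P=> /eqP qa /eqP qb ab_n; have n_gt0 := exponent_gt0 [set: V].
pose f (w : Zmod n * Zmod n) := a *+ w.1 + b *+ w.2.
have f_additive : zmod_morphism f.
  have u_n (u : V) : u *+ n.-1.+1 = 0 by rewrite prednK // mulrn_exponent.
  by move=> [i1 j1] [i2 j2]; rewrite /f /= !mulrn_ordB ?u_n // opprD addrACA.
pose phi : {additive _ -> V} :=
  HB.pack f (GRing.isZmodMorphism.Build _ _ f f_additive).
have qbil_fa w : qbil q (f w) a = qbil q a b ^+ w.2.
  rewrite (qbilDl qfq) !(qbilMnl qfq) (qbilxx qfq) qa expr1n expr1n mul1r.
  by rewrite (qbilC q).
have qbil_fb w : qbil q (f w) b = qbil q a b ^+ w.1.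
  by rewrite (qbilDl qfq) !(qbilMnl qfq) (qbilxx qfq) qb expr1n expr1n mulr1.
have expr_inj (i j : Zmod n) : qbil q a b ^+ i = qbil q a b ^+ j -> i = j.
  have lt_n (l : Zmod n) : (l < n)%N by rewrite -[X in (_ < X)%N]prednK.
  by move/eqP; rewrite (eq_prim_root_expr ab_n) !modn_small // => /eqP/val_inj.
exists phi; split=> [[i1 j1] [i2 j2] eq_f | w].
  have eq_f' : f (i1, j1) = f (i2, j2) by [].
  congr pair; apply: expr_inj.
    by rewrite -(qbil_fb (i1, j1)) -(qbil_fb (i2, j2)) eq_f'.
  by rewrite -(qbil_fa (i1, j1)) -(qbil_fa (i2, j2)) eq_f'.
rewrite /= /f /hyperbolic_form (qformD qfq) !(qformMn qfq) qa qb !expr1n !mul1r.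
by rewrite (qbilMnl qfq) (qbilMnr qfq) -exprM mulnC.
Qed.

Lemma contains_hyperbolic_pair z :
  n.-primitive_root z -> contains_hyperbolic q n z ->
  exists a b, [/\ q a = 1, q b = 1 & qbil q a b = z].
Proof.
move=> z_n [f [_ fq]]; have n_gt0 := exponent_gt0 [set: V].
pose o : Zmod n := inZp 1.
have h_oo : hyperbolic_form z (o, o) = z.
  rewrite /hyperbolic_form /= prednK // -(prim_expr_mod z_n) modnMm muln1.
  by rewrite (prim_expr_mod z_n) expr1.
have h_o0 : hyperbolic_form z (o, 0) = 1 by rewrite /hyperbolic_form muln0.
have h_0o : hyperbolic_form z (0, o) = 1 by rewrite /hyperbolic_form mul0n.
have ooE : (o, 0) + (0, o) = (o, o) :> Zmod n * Zmod n.
  by change ((o + 0, 0 + o) = (o, o)); rewrite addr0 add0r.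
exists (f (o, 0)), (f (0, o)); rewrite !fq h_o0 h_0o; split=> //.
by rewrite /qbil -raddfD ooE !fq h_oo h_o0 h_0o mulr1 invr1 mulr1.
Qed.

Lemma hyperbolic_pair_orthogonal_decomposition (e1 e2 x : V) z :
  n.-primitive_root z -> q e1 = 1 -> q e2 = 1 -> qbil q e1 e2 = z ->
  exists i j, qbil q (x - (e1 *+ i + e2 *+ j)) e1 = 1 /\
              qbil q (x - (e1 *+ i + e2 *+ j)) e2 = 1.
Proof.
move=> z_n qe1 qe2 e12; have z_neq0 : z != 0 by rewrite -e12 (qbil_neq0 qfq).
have [s xe1] := prim_rootP z_n (qbil_exponent x e1).
have [t xe2] := prim_rootP z_n (qbil_exponent x e2).
exists t, s; rewrite !(qbilDl qfq) !(qbilNl qfq) !(qbilDl qfq) !(qbilMnl qfq).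
rewrite !(qbilxx qfq) qe1 qe2 xe1 xe2 e12 (qbilC q e2) e12 !expr1n mul1r mulr1.
by split; rewrite mulfV // expf_neq0.
Qed.

Lemma hyperbolic_pair_isotropically_generated (e1 e2 : V) z :
  (forall x, q x ^+ n = 1) -> n.-primitive_root z ->
  q e1 = 1 -> q e2 = 1 -> qbil q e1 e2 = z -> isotropically_generated q.
Proof.
move=> qn z_n qe1 qe2 e12; set S := [set x | isotropic q x].
apply/eqP; rewrite eqEsubset subsetT; apply/subsetP=> x _.
have memD a b : a \in <<S>>%g -> b \in <<S>>%g -> a + b \in <<S>>%g.
  exact: groupM.
have memN a : a \in <<S>>%g -> - a \in <<S>>%g by rewrite -zmodVgE groupV.
have S_span i j : e1 *+ i + e2 *+ j \in <<S>>%g.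
  by apply: memD; rewrite -zmodXgE groupX // mem_gen // inE /isotropic ?qe1 ?qe2.
have [i [j [orth1 orth2]]] :=
  hyperbolic_pair_orthogonal_decomposition x z_n qe1 qe2 e12.
set y := x - _ in orth1 orth2; have [u qy] := prim_rootP z_n (qn y).
pose g := e1 *+ 1 + e2 *+ (n - u).
have y_g_iso : y + g \in <<S>>%g.
  apply/mem_gen; rewrite inE /isotropic (qformD qfq y) qy (qformD qfq).
  rewrite qe1 (qformMn qfq) qe2.
  rewrite (qbilDr qfq) !(qbilMnr qfq) e12 orth1 orth2 !expr1n !mul1r mulr1.
  by rewrite -exprD subnKC ?(prim_expr_order z_n) // ltnW.
have -> : x = (y + g) - g + (e1 *+ i + e2 *+ j) by rewrite addrK subrK.
by apply/memD/S_span/memD/memN/S_span.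
Qed.

End FiniteQuadraticForm.

Section Generation.
Variables (k : fieldType) (V : finZmodType) (q : V -> k).
Hypotheses (qfq : quadratic_form q) (gen_q : isotropically_generated q).
Local Notation n := (exponent [set: V]).

Lemma isotropically_generated_qform_exponent (x : V) : q x ^+ n = 1.
Proof.
move: x; apply: (isotropically_generated_ind gen_q) => [|x y qxn qyn|x /eqP->].
- by rewrite (qform0 qfq) expr1n.
- by rewrite (qformD qfq) exprMn (qbil_exponent qfq) exprMn qxn qyn !mulr1.
- exact: expr1n.
Qed.

Lemma isotropically_generated_qbil_expr d :
  (forall s t, isotropic q s -> isotropic q t -> qbil q s t ^+ d = 1) ->
  forall x y : V, qbil q x y ^+ d = 1.
Proof.
move=> iso_d x y; move: y x.
apply: (isotropically_generated_ind gen_q) => [|y z yd zd|t t_iso] x.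
- by rewrite (qbil0r qfq) expr1n.
- by rewrite (qbilDr qfq) exprMn yd zd mulr1.
move: x; apply: (isotropically_generated_ind gen_q) => [|x y xd yd|s s_iso].
- by rewrite (qbil0l qfq) expr1n.
- by rewrite (qbilDl qfq) exprMn xd yd mulr1.
exact: iso_d.
Qed.

End Generation.

Lemma isotropically_generated_hyperbolic (k : fieldType) (V : finZmodType)
  (q : V -> k) :
  metric_group q -> isotropically_generated q ->
  exists z, (exponent [set: V]).-primitive_root z /\
            contains_hyperbolic q (exponent [set: V]) z.
Proof.
case=> qfq nondeg gen_q.
have [d [a [b [ab_d iso_d]]]] := hyperbolic_pair_max_order qfq.
have [_ _ ab_prim] := and3P ab_d.
have d_n : d = exponent [set: V].
  apply/eqP; rewrite eqn_dvd (prim_root_qbil_dvd_exponent qfq ab_prim).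
  apply: (exponent_dvd_qbil_order qfq nondeg).
  exact: isotropically_generated_qbil_expr qfq gen_q _ iso_d.
rewrite d_n in ab_d ab_prim; exists (qbil q a b); split=> //.
exact: hyperbolic_pair_embedding.
Qed.

Theorem theorem6p2 (k : closedFieldType) (Hchar : [pchar k] =i pred0)
  (V : finZmodType) (q : V -> k) (Hmetric : metric_group q) :
  let n := exponent [set: V] in
  isotropically_generated q <->
  ((forall x : V, q x ^+ n = 1) /\
   exists zeta : k, n.-primitive_root zeta /\ contains_hyperbolic q n zeta).
Proof.
have [qfq _] := Hmetric.
split=> [gen_q | [qn [z [z_n hyp_z]]]].
  split; first exact: isotropically_generated_qform_exponent.
  exact: isotropically_generated_hyperbolic.
have [e1 [e2 [qe1 qe2 e12]]] := contains_hyperbolic_pair z_n hyp_z.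
exact: hyperbolic_pair_isotropically_generated qn z_n qe1 qe2 e12.
Qed.
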